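(* (Quantitative subject reduction.) If $\Gamma\vdash^{n_1} t_1:\sigma$ is derivable in $\cap J$ and $t_1\to_{d\beta}t_2$ is a non-erasing step, then $\Gamma\vdash^{n_2}t_2:\sigma$ is derivable in $\cap J$ for some $n_2<n_1$.
   Context: Terms $\mathtt T_J$: $t,u,r ::= x \mid \lambda x.t \mid t(u,y.r)$ ($y$ bound in $r$), up to $\alpha$-equivalence; $\{u/x\}t$ capture-avoiding substitution. List contexts $\mathtt D ::= \Diamond \mid t(u,y.\mathtt D)$. Distant beta: $\mathtt D\langle\lambda x.t\rangle(u,y.r) \mapsto_{d\beta} \{\{u/x\}\mathtt D\langle t\rangle/y\}r$ (variables bound by $\mathtt D$ not free in $u$, $x$ not in $\mathtt D$), $\to_{d\beta}$ its closure under all contexts. A step is non-erasing if the contracted redex $\mathtt D\langle\lambda x.t\rangle(u,y.r)$ satisfies $x\in\mathrm{fv}(t)$ and $y\in\mathrm{fv}(r)$. System $\cap J$: types $\sigma,\tau ::= \alpha \mid \mathcal M\to\sigma$, $\mathcal M=[\sigma_i]_{i\in I}$ a finite possibly empty multiset; $\sqcup$ multiset union; environments map variables to multisets, $\wedge$ pointwise union, $\Gamma;x:\mathcal M$ extension with $x\notin\mathrm{dom}\,\Gamma$. $\mathrm{ch}(\mathcal M)=\mathcal M$ if $\mathcal M\ne[\,]$, $\mathrm{ch}([\,])=[\tau]$ for an arbitrary $\tau$. Rules: (var) $x:[\sigma]\vdash x:\sigma$; (abs) from $\Gamma;x:\mathcal M\vdash t:\sigma$ infer $\Gamma\vdash\lambda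 x.t:\mathcal M\to\sigma$; (many) from $(\Gamma_i\vdash t:\sigma_i)_{i\in I}$, $I\ne\emptyset$, infer $\wedge_i\Gamma_i\vdash t:[\sigma_i]_{i\in I}$; (app) from $\Gamma\vdash t:\mathrm{ch}([\mathcal M_i\to\tau_i]_{i\in I})$, $\Delta\vdash u:\mathrm{ch}(\sqcup_i\mathcal M_i)$, $\Lambda;y:[\tau_i]_{i\in I}\vdash r:\sigma$ infer $\Gamma\wedge\Delta\wedge\Lambda\vdash t(u,y.r):\sigma$. $\vdash^n$ indicates a derivation of size $n$ = number of rule instances other than (many). *)

From Stdlib Require Import List Arith.
Import ListNotations.

(* App t u r  =  t(u, y.r), where y is de Bruijn index 0 in r. *)
Inductive tm : Type :=
| Var (n : nat)
| Lam (t : tm)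
| App (t u r : tm).

Fixpoint lift (d c : nat) (t : tm) : tm :=
  match t with
  | Var n => if n <? c then Var n else Var (n + d)
  | Lam t => Lam (lift d (S c) t)
  | App t u r => App (lift d c t) (lift d c u) (lift d (S c) r)
  end.

(* subst k u t = {u/k} t : capture-avoiding substitution of u for index k,
   indices above k are decremented (the binder of k disappears). *)
Fixpoint subst (k : nat) (u : tm) (t : tm) : tm :=
  match t with
  | Var n => if n <? k then Var n
             else if n =? k then lift k 0 u
             else Var (n - 1)
  | Lam t => Lam (subst (S k) u t)
  | App t1 t2 r => App (subst k u t1) (subst k u t2) (subst (S k) u r)
  end.

Fixpoint occurs (k : nat) (t : tm) : bool :=
  match t with
  | Var n => n =? k
  | Lam t => occurs (S k) t
  | App t u r => occurs k t || occurs k u || occurs (S k) r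
  end.

Inductive lctx : Type :=
| Hole
| LApp (t u : tm) (D : lctx).

Fixpoint plug (D : lctx) (s : tm) : tm :=
  match D with
  | Hole => s
  | LApp t u D => App t u (plug D s)
  end.

Fixpoint depth (D : lctx) : nat :=
  match D with
  | Hole => 0
  | LApp _ _ D => S (depth D)
  end.

(* Distant beta at the root:
   D<lam x.t>(u, y.r)  |->  {{u/x} D<t> / y} r.
   In de Bruijn form u is lifted over the depth(D) binders of D (this is
   the side condition "variables bound by D not free in u"); x is index 0
   in t and does not occur in D. *)
Definition dbeta_contractum (D : lctx) (t u r : tm) : tm :=
  subst 0 (plug D (subst 0 (lift (depth D) 0 u) t)) r.

(* Non-erasing d-beta steps, closed under all contexts: the contracted redex
   D<lam x.t>(u, y.r) satisfies x in fv(t) and y in fv(r). *)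
Inductive ne_step : tm -> tm -> Prop :=
| ne_root D t u r :
    occurs 0 t = true -> occurs 0 r = true ->
    ne_step (App (plug D (Lam t)) u r) (dbeta_contractum D t u r)
| ne_lam t t' : ne_step t t' -> ne_step (Lam t) (Lam t')
| ne_app1 t t' u r : ne_step t t' -> ne_step (App t u r) (App t' u r)
| ne_app2 t u u' r : ne_step u u' -> ne_step (App t u r) (App t u' r)
| ne_app3 t u r r' : ne_step r r' -> ne_step (App t u r) (App t u r').

(* Multisets are represented by lists, considered up to [meq] below. *)
Inductive ty : Type :=
| TAtom (a : nat)
| TArr (M : list ty) (s : ty).

Definition mset := list ty.

Inductive teq : ty -> ty -> Prop :=
| teq_atom a : teq (TAtom a) (TAtom a)
| teq_arr M M' s s' : meq M M' -> teq s s' -> teq (TArr M s) (TArr M' s')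
with meq : mset -> mset -> Prop :=
| meq_nil : meq [] []
| meq_cons s s' M M1 M2 :
    teq s s' -> meq M (M1 ++ M2) -> meq (s :: M) (M1 ++ s' :: M2).

Definition env := nat -> mset.

Definition env_eq (G G' : env) : Prop := forall x, meq (G x) (G' x).

Definition env_union (G D : env) : env := fun x => G x ++ D x.

Definition env_single (x : nat) (s : ty) : env :=
  fun y => if y =? x then [s] else [].

(* Gamma ; x : M, where x is the newly bound variable (index 0) *)
Definition env_ext (M : mset) (G : env) : env :=
  fun y => match y with 0 => M | S k => G k end.

Definition is_ch (M M' : mset) : Prop :=
  (M <> [] /\ M' = M) \/ (M = [] /\ exists tau, M' = [tau]).

(* typed G t s n : there is a derivation of G |- t : s of size n
   (number of rule instances other than (many));
   mtyped G t M n : the same for the multiset judgement built by (many). *)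
Inductive typed : env -> tm -> ty -> nat -> Prop :=
| t_var x s : typed (env_single x s) (Var x) s 1
| t_abs G M t s n :
    typed (env_ext M G) t s n -> typed G (Lam t) (TArr M s) (S n)
| t_app G D L t u r s (ps : list (mset * ty)) Mt Mu n1 n2 n3 :
    is_ch (map (fun p => TArr (fst p) (snd p)) ps) Mt ->
    is_ch (concat (map fst ps)) Mu ->
    mtyped G t Mt n1 ->
    mtyped D u Mu n2 ->
    typed (env_ext (map snd ps) L) r s n3 ->
    typed (env_union G (env_union D L)) (App t u r) s (S (n1 + n2 + n3))
(* judgements are taken modulo multiset equality in types and environments *)
| t_eq G G' t s s' n :
    typed G t s n -> env_eq G G' -> teq s s' -> typed G' t s' n
with mtyped : env -> tm -> mset -> nat -> Prop :=
| m_one G t s n : typed G t s n -> mtyped G t [s] n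
| m_cons G D t s M n m :
    typed G t s n -> mtyped D t M m -> mtyped (env_union G D) t (s :: M) (n + m).

(* The derivation of the redex D<lam x.t>(u, y.r) is taken apart and reassembled
   for the contractum.  Each derivation of D<lam x.t> : M_i -> tau_i is pushed
   through the list context D and, at the abstraction, the derivations of u are
   substituted for the |M_i| axioms of x; the resulting derivations of
   D<{u/x}t> : tau_i are then substituted for the axioms of y in r.  Substituting
   derivations for a variable of type M deletes exactly |M| axioms, and the
   application and abstraction rules of the redex disappear, so the size drops.
   Non-erasingness makes both multisets [tau_i] and the union of the M_i non-empty
   (a free variable always has a non-empty type), so neither was invented by ch:
   every derivation of the redex is reused and the environment is preserved. *)

From Stdlib Require Import List Arith Lia Permutation Setoid Morphisms.
Import ListNotations.

Scheme teq_mut := Induction for teq Sort Prop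
with meq_mut := Induction for meq Sort Prop.
Combined Scheme teq_meq_ind from teq_mut, meq_mut.

Fixpoint teq_refl (s : ty) : teq s s :=
  match s with
  | TAtom a => teq_atom a
  | TArr M s0 =>
      teq_arr M M s0 s0
        ((fix meq_refl (M : mset) : meq M M :=
            match M with
            | [] => meq_nil
            | x :: M' => meq_cons x x M' [] M' (teq_refl x) (meq_refl M')
            end) M)
        (teq_refl s0)
  end.

Lemma meq_refl (M : mset) : meq M M.
Proof. induction M as [|s M IH]; [constructor | exact (meq_cons s s M [] M (teq_refl s) IH)]. Qed.

Lemma meq_iff (M M' : mset) :
  meq M M' <-> exists P, Permutation M P /\ Forall2 teq P M'.
Proof.
  split.
  - induction 1 as [|s s' M M1 M2 Hs _ [P [HP HF]]].
    + exists []. split; constructor.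
    + apply Forall2_app_inv_r in HF as [P1 [P2 [HF1 [HF2 ->]]]].
      exists (P1 ++ s :: P2). split.
      * apply Permutation_cons_app, HP.
      * apply Forall2_app; [exact HF1 | constructor; assumption].
  - revert M'. induction M as [|s M IH]; intros M' [P [HP HF]].
    + apply Permutation_nil in HP as ->. inversion HF. constructor.
    + assert (Hin : In s P) by (eapply Permutation_in; [exact HP | left; reflexivity]).
      apply in_split in Hin as [P1 [P2 ->]].
      apply Permutation_cons_app_inv in HP.
      apply Forall2_app_inv_l in HF as [N1 [N2' [HF1 [HF2 ->]]]].
      inversion HF2 as [|? y ? N2 Hy HF2']; subst.
      apply meq_cons; [exact Hy |].
      apply IH. exists (P1 ++ P2). split; [exact HP | apply Forall2_app; assumption].
Qed.

Lemma Forall2_teq_refl (M : mset) : Forall2 teq M M.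
Proof. induction M; constructor; auto using teq_refl. Qed.

Lemma meq_perm (M M' : mset) : Permutation M M' -> meq M M'.
Proof. intro HP. apply meq_iff. exists M'. auto using Forall2_teq_refl. Qed.

Lemma meq_length (M M' : mset) : meq M M' -> length M = length M'.
Proof.
  intros [P [HP HF]]%meq_iff.
  rewrite (Permutation_length HP). exact (Forall2_length HF).
Qed.

Lemma meq_app (A A' B B' : mset) : meq A A' -> meq B B' -> meq (A ++ B) (A' ++ B').
Proof.
  intros [P [HP HF]]%meq_iff [Q [HQ HG]]%meq_iff. apply meq_iff.
  exists (P ++ Q). split; [apply Permutation_app | apply Forall2_app]; assumption.
Qed.

Lemma meq_cons_middle (A1 A2 B : mset) (x y : ty) :
  meq (A1 ++ A2) B -> teq x y -> meq (A1 ++ x :: A2) (y :: B).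
Proof.
  intros [P [HP HF]]%meq_iff Hxy. apply meq_iff. exists (x :: P). split.
  - rewrite <- Permutation_middle. constructor. exact HP.
  - constructor; assumption.
Qed.

Lemma meq_middle_inv (M1 M2 M3 : mset) (x : ty) :
  meq (M1 ++ x :: M2) M3 ->
  exists N1 N2 y, M3 = N1 ++ y :: N2 /\ teq x y /\ meq (M1 ++ M2) (N1 ++ N2).
Proof.
  intros [Q [HQ HF]]%meq_iff.
  assert (Hin : In x Q) by (eapply Permutation_in; [exact HQ | apply in_elt]).
  apply in_split in Hin as [Q1 [Q2 ->]].
  apply Permutation_app_inv in HQ.
  apply Forall2_app_inv_l in HF as [N1 [N2' [HF1 [HF2 ->]]]].
  inversion HF2 as [|? y ? N2 Hy HF2']; subst.
  exists N1, N2, y. repeat split; [exact Hy |].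
  apply meq_iff. exists (Q1 ++ Q2). split; [exact HQ | apply Forall2_app; assumption].
Qed.

Lemma teq_meq_sym :
  (forall s s', teq s s' -> teq s' s) /\ (forall M M', meq M M' -> meq M' M).
Proof.
  apply teq_meq_ind; intros; constructor + apply meq_cons_middle; assumption.
Qed.

Lemma teq_meq_trans :
  (forall s1 s2, teq s1 s2 -> forall s3, teq s2 s3 -> teq s1 s3) /\
  (forall M1 M2, meq M1 M2 -> forall M3, meq M2 M3 -> meq M1 M3).
Proof.
  apply teq_meq_ind.
  - trivial.
  - intros M1 M2 s1 s2 _ IHM _ IHs s3 H3. inversion H3; subst. constructor; auto.
  - trivial.
  - intros s s' M M1 M2 _ IHs _ IHM M3 H3.
    apply meq_middle_inv in H3 as [N1 [N2 [y [-> [Hy HN]]]]].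
    apply meq_cons; auto.
Qed.

#[global] Instance teq_Equivalence : Equivalence teq.
Proof.
  split; [exact teq_refl | exact (proj1 teq_meq_sym) |].
  intros x y z Hxy. exact (proj1 teq_meq_trans x y Hxy z).
Qed.

#[global] Instance meq_Equivalence : Equivalence meq.
Proof.
  split; [exact meq_refl | exact (proj2 teq_meq_sym) |].
  intros M1 M2 M3 H12. exact (proj2 teq_meq_trans M1 M2 H12 M3).
Qed.

#[global] Instance app_meq_Proper : Proper (meq ==> meq ==> meq) (@app ty).
Proof. intros A A' HA B B' HB. apply meq_app; assumption. Qed.

Ltac perm_front h :=
  match goal with
  | |- Permutation (h ++ _) _ => reflexivity
  | |- Permutation (_ ++ h) _ => apply Permutation_app_comm
  | |- Permutation (_ ++ _) _ =>
      etransitivity; [apply Permutation_app_head; perm_front h | apply Permutation_app_swap_app]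
  end.

Ltac perm_solve :=
  repeat rewrite <- app_assoc;
  match goal with
  | |- Permutation ?L ?L => reflexivity
  | |- Permutation _ (?h ++ _) =>
      etransitivity; [perm_front h | apply Permutation_app_head; perm_solve]
  end.

Ltac meq_solve :=
  repeat rewrite app_nil_r; simpl; first [reflexivity | apply meq_perm; perm_solve].

Definition env_empty : env := fun _ => [].

Definition env_lift (d c : nat) (G : env) : env :=
  fun y => if y <? c then G y else if y <? c + d then [] else G (y - d).

Definition env_remove (k : nat) (G : env) : env :=
  fun y => if y <? k then G y else G (S y).

#[global] Instance env_eq_Equivalence : Equivalence env_eq.
Proof.
  split.
  - intros G y. reflexivity.
  - intros G G' H y. symmetry. apply H.
  - intros G1 G2 G3 H12 H23 y. etransitivity; [apply H12 | apply H23].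
Qed.

#[global] Instance env_union_Proper : Proper (env_eq ==> env_eq ==> env_eq) env_union.
Proof. intros A A' HA B B' HB y. unfold env_union. rewrite (HA y), (HB y). reflexivity. Qed.

#[global] Instance env_ext_Proper (M : mset) : Proper (env_eq ==> env_eq) (env_ext M).
Proof. intros A A' HA [|y]; [reflexivity | apply HA]. Qed.

#[global] Instance env_lift_Proper (d c : nat) : Proper (env_eq ==> env_eq) (env_lift d c).
Proof.
  intros A A' HA y. unfold env_lift.
  destruct (y <? c); [|destruct (y <? c + d)]; easy.
Qed.

#[global] Instance env_remove_Proper (k : nat) : Proper (env_eq ==> env_eq) (env_remove k).
Proof. intros A A' HA y. unfold env_remove. destruct (y <? k); apply HA. Qed.

Ltac env_unfold :=
  unfold env_union, env_ext, env_single, env_lift, env_remove, env_empty; cbv beta.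

Ltac nat_cases :=
  repeat match goal with
  | |- context [?a <? ?b] => destruct (Nat.ltb_spec a b)
  | |- context [?a =? ?b] => destruct (Nat.eqb_spec a b)
  end; try lia; try reflexivity.

Lemma env_union_comm (A B : env) : env_eq (env_union A B) (env_union B A).
Proof. intro y; env_unfold; meq_solve. Qed.

Lemma env_union_assoc (A B C : env) :
  env_eq (env_union A (env_union B C)) (env_union (env_union A B) C).
Proof. intro y; env_unfold; meq_solve. Qed.

Lemma env_union_empty_l (A : env) : env_eq (env_union env_empty A) A.
Proof. intro y; env_unfold; meq_solve. Qed.

Lemma env_union_empty_r (A : env) : env_eq (env_union A env_empty) A.
Proof. intro y; env_unfold; meq_solve. Qed.

Lemma env_lift_union (d c : nat) (A B : env) :
  env_eq (env_lift d c (env_union A B)) (env_union (env_lift d c A) (env_lift d c B)).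
Proof. intro y; env_unfold; nat_cases. Qed.

Lemma env_lift_ext (d c : nat) (M : mset) (G : env) :
  env_eq (env_lift d (S c) (env_ext M G)) (env_ext M (env_lift d c G)).
Proof.
  intros [|y]; env_unfold; nat_cases.
  replace (S y - d) with (S (y - d)) by lia. reflexivity.
Qed.

Lemma env_remove_union (k : nat) (A B : env) :
  env_eq (env_remove k (env_union A B)) (env_union (env_remove k A) (env_remove k B)).
Proof. intro y; env_unfold; nat_cases. Qed.

Lemma env_ext_union_lift1 (M : mset) (G D : env) :
  env_eq (env_union (env_ext M G) (env_lift 1 0 D)) (env_ext M (env_union G D)).
Proof.
  intros [|y]; env_unfold; simpl; nat_cases; rewrite ?Nat.sub_0_r, ?app_nil_r; reflexivity.
Qed.

Lemma env_remove_ext (k : nat) (M : mset) (G : env) :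
  env_eq (env_remove (S k) (env_ext M G)) (env_ext M (env_remove k G)).
Proof. intros [|y]; env_unfold; nat_cases. Qed.

Lemma lift_0 (t : tm) (c : nat) : lift 0 c t = t.
Proof.
  revert c. induction t; intro c; simpl; f_equal; auto.
  destruct (n <? c); f_equal; lia.
Qed.

Lemma lift_lift (t : tm) (d d' c : nat) : lift d c (lift d' c t) = lift (d + d') c t.
Proof.
  revert c. induction t; intro c; simpl; f_equal; auto.
  destruct (Nat.ltb_spec n c); simpl; nat_cases; f_equal; lia.
Qed.

Scheme typed_mut := Induction for typed Sort Prop
with mtyped_mut := Induction for mtyped Sort Prop.
Combined Scheme typed_mtyped_ind from typed_mut, mtyped_mut.

#[global] Instance typed_Proper : Proper (env_eq ==> eq ==> teq ==> eq ==> iff) typed.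
Proof.
  intros G G' HG t ? <- s s' Hs n ? <-.
  split; intro H; eapply t_eq; eauto; symmetry; assumption.
Qed.

Lemma meq_neq_nil (M M' : mset) : meq M M' -> M <> [] -> M' <> [].
Proof. intros H HM ->. apply meq_length in H. destruct M; [contradiction | discriminate]. Qed.

Lemma typed_occurs_nonempty :
  (forall G t s n, typed G t s n -> forall k, occurs k t = true -> G k <> []) /\
  (forall G t M n, mtyped G t M n -> forall k, occurs k t = true -> G k <> []).
Proof.
  assert (Hl : forall A B : mset, A <> [] -> A ++ B <> [])
    by (intros A B HA HAB; apply app_eq_nil in HAB; tauto).
  assert (Hr : forall A B : mset, B <> [] -> A ++ B <> [])
    by (intros A B HB HAB; apply app_eq_nil in HAB; tauto).
  apply typed_mtyped_ind; simpl.
  - intros x s k Hk. apply Nat.eqb_eq in Hk as ->.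
    unfold env_single. rewrite Nat.eqb_refl. discriminate.
  - intros G M t s n _ IH k Hk. exact (IH (S k) Hk).
  - intros G D L t u r s ps Mt Mu n1 n2 n3 _ _ _ IHt _ IHu _ IHr k Hk.
    unfold env_union. apply Bool.orb_true_iff in Hk as [[Hk|Hk]%Bool.orb_true_iff|Hk].
    + apply Hl, IHt, Hk.
    + apply Hr, Hl, IHu, Hk.
    + apply Hr, Hr, (IHr (S k) Hk).
  - intros G G' t s s' n _ IH E _ k Hk. exact (meq_neq_nil _ _ (E k) (IH k Hk)).
  - intros G t s n _ IH k Hk. exact (IH k Hk).
  - intros G D t s M n m _ IHt _ _ k Hk. apply Hl, IHt, Hk.
Qed.

Lemma typed_lift :
  (forall G t s n, typed G t s n ->
     forall d c, typed (env_lift d c G) (lift d c t) s n) /\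
  (forall G t M n, mtyped G t M n ->
     forall d c, exists G', env_eq G' (env_lift d c G) /\ mtyped G' (lift d c t) M n).
Proof.
  apply typed_mtyped_ind; simpl.
  - intros x s d c. destruct (Nat.ltb_spec x c);
      (eapply t_eq; [apply t_var | | reflexivity]); intro y; env_unfold; nat_cases.
  - intros G M t s n _ IH d c.
    apply t_abs. eapply t_eq; [apply IH | apply env_lift_ext | reflexivity].
  - intros G D L t u r s ps Mt Mu n1 n2 n3 Hc1 Hc2 _ IHt _ IHu _ IHr d c.
    destruct (IHt d c) as [G1 [HG1 Ht]], (IHu d c) as [D1 [HD1 Hu]].
    eapply t_eq; [eapply t_app; [exact Hc1 | exact Hc2 | exact Ht | exact Hu |] | | reflexivity].
    + eapply t_eq; [apply (IHr d (S c)) | apply env_lift_ext | reflexivity].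
    + rewrite HG1, HD1, !env_lift_union. reflexivity.
  - intros G G' t s s' n _ IH E Hs d c.
    eapply t_eq; [apply IH | rewrite E; reflexivity | exact Hs].
  - intros G t s n _ IH d c.
    exists (env_lift d c G). split; [reflexivity | constructor; apply IH].
  - intros G D t s M n m _ IHt _ IHM d c.
    destruct (IHM d c) as [D1 [HD1 HM]]. exists (env_union (env_lift d c G) D1). split.
    + rewrite HD1, env_lift_union. reflexivity.
    + constructor; [apply IHt | exact HM].
Qed.

(* The (many) rule with a possibly empty index set: a substituted variable may
   have type [] in a subterm where it does not occur. *)
Inductive mtyped0 : env -> tm -> mset -> nat -> Prop :=
| m0_nil D w : env_eq D env_empty -> mtyped0 D w [] 0
| m0_cons D D1 D2 w s M n m :
    typed D1 w s n -> mtyped0 D2 w M m ->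
    env_eq D (env_union D1 D2) -> mtyped0 D w (s :: M) (n + m).

Lemma mtyped0_cons_inv (D : env) (w : tm) (s : ty) (M : mset) (k : nat) :
  mtyped0 D w (s :: M) k ->
  exists D1 D2 n m, typed D1 w s n /\ mtyped0 D2 w M m /\
                    env_eq D (env_union D1 D2) /\ k = n + m.
Proof. inversion 1; subst. do 4 eexists. eauto. Qed.

Lemma mtyped0_nil_inv (D : env) (w : tm) (k : nat) :
  mtyped0 D w [] k -> env_eq D env_empty /\ k = 0.
Proof. inversion 1; subst. auto. Qed.

Lemma mtyped0_app_inv (A B : mset) (D : env) (w : tm) (m : nat) :
  mtyped0 D w (A ++ B) m ->
  exists D1 D2 m1 m2, mtyped0 D1 w A m1 /\ mtyped0 D2 w B m2 /\
                      env_eq D (env_union D1 D2) /\ m = m1 + m2.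
Proof.
  revert D m. induction A as [|s A IH]; simpl; intros D m H.
  - exists env_empty, D, 0, m. repeat split; [constructor; reflexivity | exact H |].
    symmetry. apply env_union_empty_l.
  - apply mtyped0_cons_inv in H as [D1 [D2 [n [m0 [Ht [HM [E ->]]]]]]].
    apply IH in HM as [F1 [F2 [m1 [m2 [H1 [H2 [E' ->]]]]]]].
    exists (env_union D1 F1), F2, (n + m1), m2. repeat split.
    + econstructor; eauto. reflexivity.
    + exact H2.
    + rewrite E, E'. apply env_union_assoc.
    + lia.
Qed.

Lemma mtyped0_perm (D : env) (w : tm) (M M' : mset) (m : nat) :
  Permutation M M' -> mtyped0 D w M m -> mtyped0 D w M' m.
Proof.
  intro HP. revert D m. induction HP as [| |s s' M|]; intros D m H; auto.
  - apply mtyped0_cons_inv in H as [D1 [D2 [n [m0 [Ht [HM [E ->]]]]]]].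
    econstructor; eauto.
  - apply mtyped0_cons_inv in H as [D1 [D2 [n [m0 [Ht [HM [E ->]]]]]]].
    apply mtyped0_cons_inv in HM as [D3 [D4 [n' [m1 [Ht' [HM' [E' ->]]]]]]].
    replace (n + (n' + m1)) with (n' + (n + m1)) by lia.
    econstructor; [exact Ht' | econstructor; [exact Ht | exact HM' | reflexivity] |].
    rewrite E, E', !env_union_assoc, (env_union_comm D1 D3). reflexivity.
Qed.

Lemma mtyped0_Forall2_teq (D : env) (w : tm) (M M' : mset) (m : nat) :
  Forall2 teq M M' -> mtyped0 D w M m -> mtyped0 D w M' m.
Proof.
  intro HF. revert D m. induction HF as [|s s' M M' Hs _ IH]; intros D m H; [exact H |].
  apply mtyped0_cons_inv in H as [D1 [D2 [n [m0 [Ht [HM [E ->]]]]]]].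
  econstructor; [eapply t_eq; [exact Ht | reflexivity | exact Hs] | apply IH, HM | exact E].
Qed.

Lemma mtyped0_meq (D : env) (w : tm) (M M' : mset) (m : nat) :
  meq M M' -> mtyped0 D w M m -> mtyped0 D w M' m.
Proof.
  intros [P [HP HF]]%meq_iff H.
  eapply mtyped0_Forall2_teq; [exact HF | eapply mtyped0_perm; eauto].
Qed.

Lemma mtyped_mtyped0 (G : env) (t : tm) (M : mset) (n : nat) :
  mtyped G t M n -> mtyped0 G t M n.
Proof.
  induction 1 as [G t s n Ht | G D t s M n m Ht _ IH].
  - rewrite <- (Nat.add_0_r n).
    econstructor; [exact Ht | constructor; reflexivity |]. symmetry. apply env_union_empty_r.
  - econstructor; [exact Ht | exact IH | reflexivity].
Qed.

Lemma mtyped0_lift (D : env) (w : tm) (M : mset) (m : nat) (d c : nat) :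
  mtyped0 D w M m -> mtyped0 (env_lift d c D) (lift d c w) M m.
Proof.
  induction 1 as [D w HD | D D1 D2 w s M n m Ht _ IH HD].
  - constructor. rewrite HD. intro y; env_unfold; nat_cases.
  - econstructor; [apply (proj1 typed_lift), Ht | exact IH |].
    rewrite HD. apply env_lift_union.
Qed.

Lemma typed_subst_var (x k : nat) (s : ty) (u : tm) (Dw : env) (m : nat) :
  mtyped0 Dw (lift k 0 u) (env_single x s k) m ->
  exists n', n' + length (env_single x s k) = 1 + m /\
             typed (env_union (env_remove k (env_single x s)) Dw) (subst k u (Var x)) s n'.
Proof.
  unfold env_single at 1 2. simpl subst. intro H.
  destruct (Nat.eqb_spec k x) as [<-|Hkx].
  - rewrite Nat.ltb_irrefl, Nat.eqb_refl.
    apply mtyped0_cons_inv in H as [D1 [D2 [n0 [m0 [Ht [HM [E ->]]]]]]].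
    apply mtyped0_nil_inv in HM as [E2 ->].
    exists n0. split; [simpl; lia |].
    eapply t_eq; [exact Ht | | reflexivity].
    rewrite E, E2, env_union_empty_r. intro y; env_unfold; nat_cases.
  - apply mtyped0_nil_inv in H as [E ->].
    exists 1. split; [simpl; lia |].
    rewrite E, env_union_empty_r.
    destruct (Nat.ltb_spec x k); [| destruct (Nat.eqb_spec x k); [congruence |]];
      (eapply t_eq; [apply t_var | | reflexivity]); intro y; env_unfold; nat_cases.
Qed.

Lemma typed_subst :
  (forall G t s n, typed G t s n ->
     forall k u Dw m, mtyped0 Dw (lift k 0 u) (G k) m ->
     exists n', n' + length (G k) = n + m /\
                typed (env_union (env_remove k G) Dw) (subst k u t) s n') /\
  (forall G t M n, mtyped G t M n ->
     forall k u Dw m, mtyped0 Dw (lift k 0 u) (G k) m ->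
     exists G' n', env_eq G' (env_union (env_remove k G) Dw) /\
                   n' + length (G k) = n + m /\ mtyped G' (subst k u t) M n').
Proof.
  assert (Hlift1 : forall Dw k u M m, mtyped0 Dw (lift k 0 u) M m ->
                   mtyped0 (env_lift 1 0 Dw) (lift (S k) 0 u) M m).
  { intros Dw k u M m H. change (S k) with (1 + k). rewrite <- lift_lift. apply mtyped0_lift, H. }
  assert (Hbinder : forall k M G Dw,
             env_eq (env_union (env_remove (S k) (env_ext M G)) (env_lift 1 0 Dw))
                    (env_ext M (env_union (env_remove k G) Dw))).
  { intros. rewrite env_remove_ext. apply env_ext_union_lift1. }
  apply typed_mtyped_ind.
  - intros x s k u Dw m H. exact (typed_subst_var x k s u Dw m H).
  - intros G M t s n _ IH k u Dw m H.
    destruct (IH (S k) u _ m (Hlift1 _ _ _ _ _ H)) as [n' [Hn Ht']].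
    exists (S n'). split; [simpl in Hn; lia |].
    apply t_abs. eapply t_eq; [exact Ht' | apply Hbinder | reflexivity].
  - intros G D L t u r s ps Mt Mu n1 n2 n3 Hc1 Hc2 _ IHt _ IHu _ IHr k w Dw m H.
    apply mtyped0_app_inv in H as [D1 [Dx [m1 [mx [H1 [Hx [E1 ->]]]]]]].
    apply mtyped0_app_inv in Hx as [D2 [D3 [m2 [m3 [H2 [H3 [E2 ->]]]]]]].
    destruct (IHt k w D1 m1 H1) as [G1' [n1' [EG1 [Hn1 Ht']]]].
    destruct (IHu k w D2 m2 H2) as [G2' [n2' [EG2 [Hn2 Hu']]]].
    destruct (IHr (S k) w _ m3 (Hlift1 _ _ _ _ _ H3)) as [n3' [Hn3 Hr']].
    exists (S (n1' + n2' + n3')). split.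
    + simpl in Hn3. unfold env_union. rewrite !length_app. lia.
    + eapply t_eq;
        [eapply t_app; [exact Hc1 | exact Hc2 | exact Ht' | exact Hu' |] | | reflexivity].
      * eapply t_eq; [exact Hr' | apply Hbinder | reflexivity].
      * rewrite EG1, EG2, E1, E2, !env_remove_union. intro y; env_unfold; meq_solve.
  - intros G G' t s s' n _ IH E Hs k u Dw m H.
    destruct (IH k u Dw m (mtyped0_meq _ _ _ _ _ (symmetry (E k)) H)) as [n' [Hn Ht']].
    exists n'. split; [rewrite <- (meq_length _ _ (E k)); exact Hn |].
    eapply t_eq; [exact Ht' | rewrite E; reflexivity | exact Hs].
  - intros G t s n _ IH k u Dw m H.
    destruct (IH k u Dw m H) as [n' [Hn Ht']].
    exists (env_union (env_remove k G) Dw), n'.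
    repeat split; [reflexivity | exact Hn | constructor; exact Ht'].
  - intros G D t s M n m0 _ IHt _ IHM k u Dw m H.
    apply mtyped0_app_inv in H as [D1 [D2 [m1 [m2 [H1 [H2 [E ->]]]]]]].
    destruct (IHt k u D1 m1 H1) as [n' [Hn Ht']].
    destruct (IHM k u D2 m2 H2) as [G' [n'' [EG [Hn' HM']]]].
    exists (env_union (env_union (env_remove k G) D1) G'), (n' + n''). repeat split.
    + rewrite EG, E, env_remove_union. intro y; env_unfold; meq_solve.
    + unfold env_union. rewrite length_app. lia.
    + constructor; assumption.
Qed.

Lemma typed_lam_inv (G : env) (t : tm) (T : ty) (n : nat) :
  typed G (Lam t) T n ->
  exists M s n0, typed (env_ext M G) t s n0 /\ teq (TArr M s) T /\ n = S n0.
Proof.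
  remember (Lam t) as t' eqn:Et.
  induction 1 as [| G M t0 s n Ht _ | | G G' t0 s s' n _ IH HG Hs']; try discriminate.
  - injection Et as ->. exists M, s, n. repeat split; [exact Ht | reflexivity].
  - destruct (IH Et) as [M [s0 [n0 [Ht [Hs ->]]]]].
    exists M, s0, n0. rewrite <- HG. repeat split; [exact Ht | etransitivity; eassumption].
Qed.

Lemma typed_app_inv (G : env) (t u r : tm) (T : ty) (n : nat) :
  typed G (App t u r) T n ->
  exists G1 G2 L (ps : list (mset * ty)) Mt Mu n1 n2 n3 s,
    is_ch (map (fun p => TArr (fst p) (snd p)) ps) Mt /\ is_ch (concat (map fst ps)) Mu /\
    mtyped G1 t Mt n1 /\ mtyped G2 u Mu n2 /\ typed (env_ext (map snd ps) L) r s n3 /\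
    env_eq (env_union G1 (env_union G2 L)) G /\ teq s T /\ n = S (n1 + n2 + n3).
Proof.
  remember (App t u r) as t' eqn:Et. induction 1; try discriminate.
  - injection Et as -> -> ->. exists G, D, L, ps, Mt, Mu, n1, n2, n3, s.
    repeat split; auto; reflexivity.
  - destruct (IHtyped Et)
      as [G1 [G2 [L [ps [Mt [Mu [n1 [n2 [n3 [s0 [? [? [? [? [? [E [Hs ?]]]]]]]]]]]]]]]]].
    exists G1, G2, L, ps, Mt, Mu, n1, n2, n3, s0.
    repeat split; auto; [rewrite E | etransitivity]; eassumption.
Qed.

Lemma typed_plug_lam_occurs (D : lctx) (t : tm) (G : env) (T : ty) (n : nat)
    (M : mset) (tau : ty) :
  typed G (plug D (Lam t)) T n -> teq T (TArr M tau) -> occurs 0 t = true -> M <> [].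
Proof.
  revert G T n. induction D as [|a b D IH]; simpl; intros G T n H HT Hocc.
  - apply typed_lam_inv in H as [M' [s [n0 [Ht [HT' _]]]]].
    assert (HA : teq (TArr M' s) (TArr M tau)) by (etransitivity; eassumption).
    inversion HA; subst.
    eapply meq_neq_nil; [eassumption |].
    exact (proj1 typed_occurs_nonempty _ _ _ _ Ht 0 Hocc).
  - apply typed_app_inv in H
      as [? [? [? [? [? [? [? [? [? [s [_ [_ [_ [_ [Hr [_ [Hs _]]]]]]]]]]]]]]]]].
    eapply IH; [exact Hr | etransitivity; eassumption | exact Hocc].
Qed.

Lemma typed_plug_beta (D : lctx) (t u : tm) (G Du : env) (T : ty) (n : nat)
    (M : mset) (tau : ty) (m : nat) :
  typed G (plug D (Lam t)) T n -> teq T (TArr M tau) -> mtyped0 Du u M m ->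
  exists n', typed (env_union G Du) (plug D (subst 0 (lift (depth D) 0 u) t)) tau n' /\
             n' + length M + 1 = n + m.
Proof.
  revert u G Du T n m. induction D as [|a b D IH]; simpl; intros u G Du T n m H HT Hu.
  - apply typed_lam_inv in H as [M' [s [n0 [Ht [HT' ->]]]]].
    assert (HA : teq (TArr M' s) (TArr M tau)) by (etransitivity; eassumption).
    inversion HA as [|? ? ? ? HM Hs]; subst.
    rewrite lift_0.
    assert (Hu' : mtyped0 Du (lift 0 0 u) (env_ext M' G 0) m)
      by (rewrite lift_0; eapply mtyped0_meq; [symmetry; exact HM | exact Hu]).
    destruct (proj1 typed_subst _ _ _ _ Ht 0 u Du m Hu') as [n' [Hn Ht']].
    exists n'. simpl in Hn. rewrite <- (meq_length _ _ HM). split; [| lia].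
    eapply t_eq; [exact Ht' | | exact Hs].
    intro y; env_unfold; nat_cases.
  - apply typed_app_inv in H
      as [G1 [G2 [L [ps [Mt [Mu [n1 [n2 [n3 [s [Hc1 [Hc2 [Ht [Hv [Hr [E [Hs ->]]]]]]]]]]]]]]]]].
    destruct (IH (lift 1 0 u) _ _ _ _ m Hr (ltac:(etransitivity; eassumption))
                 (mtyped0_lift _ _ _ _ 1 0 Hu)) as [n' [Hr' Hn]].
    rewrite lift_lift, Nat.add_1_r in Hr'.
    exists (S (n1 + n2 + n')). split; [| lia].
    rewrite <- E. eapply t_eq;
      [eapply t_app; [exact Hc1 | exact Hc2 | exact Ht | exact Hv |] | | reflexivity].
    + rewrite <- env_ext_union_lift1. exact Hr'.
    + intro y; env_unfold; meq_solve.
Qed.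

Lemma mtyped0_plug_beta (D : lctx) (t u : tm) (ps : list (mset * ty)) (G Du : env) (n m : nat) :
  mtyped0 G (plug D (Lam t)) (map (fun p => TArr (fst p) (snd p)) ps) n ->
  mtyped0 Du u (concat (map fst ps)) m ->
  exists n', mtyped0 (env_union G Du) (plug D (subst 0 (lift (depth D) 0 u) t)) (map snd ps) n' /\
             n' + length (concat (map fst ps)) + length ps = n + m.
Proof.
  revert G Du n m. induction ps as [|p ps IH]; simpl; intros G Du n m H Hu.
  - apply mtyped0_nil_inv in H as [E ->], Hu as [Eu ->].
    exists 0. split; [constructor; rewrite E, Eu; apply env_union_empty_l | reflexivity].
  - apply mtyped0_cons_inv in H as [G1 [G2 [a [b [Ht [HM [E ->]]]]]]].
    apply mtyped0_app_inv in Hu as [F1 [F2 [m1 [m2 [Hu1 [Hu2 [EF ->]]]]]]].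
    destruct (typed_plug_beta D t u _ _ _ _ _ _ _ Ht (teq_refl _) Hu1) as [a' [Ht' Ha]].
    destruct (IH _ _ _ _ HM Hu2) as [b' [HM' Hb]].
    exists (a' + b'). split.
    + econstructor; [exact Ht' | exact HM' |]. rewrite E, EF. intro y; env_unfold; meq_solve.
    + (* [lia] would treat [length] at [mset] and at [list ty] as distinct atoms. *)
      rewrite length_app. unfold mset in *. lia.
Qed.

Lemma is_ch_nonempty (M M' : mset) : is_ch M M' -> M <> [] -> M' = M.
Proof. intros [[_ ->] | [-> _]] HM; [reflexivity | contradiction]. Qed.

Lemma typed_root_step (Dc : lctx) (t u r : tm) (G D L : env) (s : ty)
    (ps : list (mset * ty)) (Mt Mu : mset) (n1 n2 n3 : nat) :
  occurs 0 t = true -> occurs 0 r = true ->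
  is_ch (map (fun p => TArr (fst p) (snd p)) ps) Mt -> is_ch (concat (map fst ps)) Mu ->
  mtyped G (plug Dc (Lam t)) Mt n1 -> mtyped D u Mu n2 ->
  typed (env_ext (map snd ps) L) r s n3 ->
  exists n, n < S (n1 + n2 + n3) /\
            typed (env_union G (env_union D L)) (dbeta_contractum Dc t u r) s n.
Proof.
  intros Ht0 Hr0 Hc1 Hc2 Ht Hu Hr.
  destruct ps as [|p ps].
  { exfalso. exact (proj1 typed_occurs_nonempty _ _ _ _ Hr 0 Hr0 eq_refl). }
  apply is_ch_nonempty in Hc1 as ->; [| discriminate].
  apply mtyped_mtyped0 in Ht.
  assert (Hp : fst p <> []).
  { apply mtyped0_cons_inv in Ht as [? [? [? [? [Hp _]]]]].
    exact (typed_plug_lam_occurs Dc t _ _ _ _ (snd p) Hp (teq_refl _) Ht0). }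
  apply is_ch_nonempty in Hc2 as ->; [| simpl; intro Hnil; apply app_eq_nil in Hnil; tauto].
  apply mtyped_mtyped0 in Hu.
  destruct (mtyped0_plug_beta Dc t u _ _ _ _ _ Ht Hu) as [n' [HM Hn']].
  rewrite <- (lift_0 _ 0) in HM.
  destruct (proj1 typed_subst _ _ _ _ Hr 0 _ _ _ HM) as [n'' [Hn'' Hr']].
  exists n''. split.
  - simpl in Hn', Hn''. rewrite length_map in Hn''. lia.
  - unfold dbeta_contractum. eapply t_eq; [exact Hr' | | reflexivity].
    intro y; env_unfold; nat_cases; meq_solve.
Qed.

Lemma subject_reduction :
  (forall G t s n, typed G t s n ->
     forall t', ne_step t t' -> exists n', n' < n /\ typed G t' s n') /\
  (forall G t M n, mtyped G t M n ->
     forall t', ne_step t t' -> exists n', n' < n /\ mtyped G t' M n').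
Proof.
  apply typed_mtyped_ind.
  - intros x s t' Hst. inversion Hst.
  - intros G M t s n _ IH t' Hst. inversion Hst as [| ? t'' Hstep | | |]; subst.
    destruct (IH _ Hstep) as [n' [Hn Ht']]. exists (S n'). split; [lia | constructor; exact Ht'].
  - intros G D L t u r s ps Mt Mu n1 n2 n3 Hc1 Hc2 Ht IHt Hu IHu Hr IHr t' Hst.
    inversion Hst as [| | ? ? ? ? Hstep | ? ? ? ? Hstep | ? ? ? ? Hstep]; subst.
    + eapply typed_root_step; eassumption.
    + destruct (IHt _ Hstep) as [m [Hm Ht']].
      exists (S (m + n2 + n3)). split; [lia | econstructor; eassumption].
    + destruct (IHu _ Hstep) as [m [Hm Hu']].
      exists (S (n1 + m + n3)). split; [lia | econstructor; eassumption].
    + destruct (IHr _ Hstep) as [m [Hm Hr']].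
      exists (S (n1 + n2 + m)). split; [lia | econstructor; eassumption].
  - intros G G' t s s' n _ IH E Hs t' Hst.
    destruct (IH _ Hst) as [m [Hm Ht']]. exists m. split; [exact Hm | eapply t_eq; eassumption].
  - intros G t s n _ IH t' Hst.
    destruct (IH _ Hst) as [m [Hm Ht']]. exists m. split; [exact Hm | constructor; exact Ht'].
  - intros G D t s M n m _ IHt _ IHM t' Hst.
    destruct (IHt _ Hst) as [a [Ha Ht']], (IHM _ Hst) as [b [Hb HM']].
    exists (a + b). split; [lia | constructor; assumption].
Qed.

Theorem mainTheorem8 :
  forall (G : env) (t1 t2 : tm) (s : ty) (n1 : nat),
    typed G t1 s n1 ->
    ne_step t1 t2 ->
    exists n2, n2 < n1 /\ typed G t2 s n2.
Proof. intros G t1 t2 s n1 Ht Hst. exact (proj1 subject_reduction G t1 s n1 Ht t2 Hst). Qed.
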